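(* Let $\mathcal{M}^2$ be the set of all maskable observables on $\mathbb{C}^2$, i.e. Hermitian $2\times2$ matrices $\mathcal{O}$ for which there exists some quantum channel $\mathcal{E}$ with $\mathcal{E}^*(\mathcal{O})=\mathbb{I}$. Then there is no single quantum channel $\mathcal{E}$ on $2\times 2$ matrices such that $\mathcal{E}^*(\mathcal{O})=\mathbb{I}$ for all $\mathcal{O}\in\mathcal{M}^2$.
   Context: A quantum channel $\mathcal{E}$ is a linear completely positive trace-preserving map on $d\times d$ complex matrices, $\mathcal{E}(\rho)=\sum_i E_i\rho E_i^\dagger$ with $\sum_i E_i^\dagger E_i=\mathbb{I}$; its adjoint is $\mathcal{E}^*(X)=\sum_i E_i^\dagger X E_i$, so that $\operatorname{Tr}(\mathcal{E}(\rho)X)=\operatorname{Tr}(\rho\,\mathcal{E}^*(X))$. An observable is a Hermitian matrix. *)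

From HB Require Import structures.
From mathcomp Require Import all_boot all_order all_algebra.
From mathcomp Require Import reals.
From mathcomp Require Import complex.
Set Implicit Arguments. Unset Strict Implicit. Unset Printing Implicit Defensive.
Import Order.TTheory GRing.Theory Num.Theory.
Local Open Scope ring_scope.
Local Open Scope complex_scope.

Definition dagger (C : numClosedFieldType) (m n : nat) (A : 'M[C]_(m, n)) : 'M[C]_(n, m) :=
  (map_mx Num.conj A)^T.

(* a finite family of Kraus operators E_0..E_{k-1} on d x d matrices is a
   quantum channel iff  sum_i E_i^dagger E_i = I *)
Definition is_channel (C : numClosedFieldType) (d k : nat) (E : 'I_k -> 'M[C]_d) : Prop :=
  \sum_(i < k) (dagger (E i) *m E i) = 1%:M.

Definition adjoint_ch (C : numClosedFieldType) (d k : nat) (E : 'I_k -> 'M[C]_d)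
  (X : 'M[C]_d) : 'M[C]_d :=
  \sum_(i < k) (dagger (E i) *m X *m E i).

Definition hermitian (C : numClosedFieldType) (d : nat) (O : 'M[C]_d) : Prop :=
  dagger O = O.

Definition maskable (C : numClosedFieldType) (d : nat) (O : 'M[C]_d) : Prop :=
  hermitian O /\
  exists (k : nat) (E : 'I_k -> 'M[C]_d), is_channel E /\ adjoint_ch E O = 1%:M.

(* Every basis projector |p><p| is maskable: the reset channel to |p> has
   adjoint X |-> <p|X|p> I.  A channel E masking all of them would, by
   linearity, send I = sum_p |p><p| to d I, whereas trace preservation means
   exactly E^*(I) = I; this is impossible once d >= 2. *)

From HB Require Import structures.
From mathcomp Require Import all_boot all_order all_algebra.
From mathcomp Require Import reals.
From mathcomp Require Import complex.

Set Implicit Arguments.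
Unset Strict Implicit.
Unset Printing Implicit Defensive.
Import Order.TTheory GRing.Theory Num.Theory.
Local Open Scope ring_scope.
Local Open Scope complex_scope.

Section Masking.
Variable C : numClosedFieldType.

Lemma dagger_delta m n (i : 'I_m) (j : 'I_n) :
  dagger (delta_mx i j : 'M[C]_(m, n)) = delta_mx j i.
Proof. by rewrite /dagger map_delta_mx trmx_delta. Qed.

Lemma delta_mulmx_delta d (j p : 'I_d) (X : 'M[C]_d) :
  delta_mx j p *m X *m delta_mx p j = X p p *: delta_mx j j.
Proof.
apply/matrixP => a b; rewrite !mxE (bigD1 p) //= big1 => [|k /negPf kp]; last first.
  by rewrite [delta_mx p j k b]mxE kp mulr0.
rewrite !mxE (bigD1 p) //= big1 => [|l /negPf lp]; last by rewrite mxE lp andbF mul0r.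
rewrite !mxE !eqxx !andbT !addr0.
by case: (a == j); case: (b == j); rewrite ?(mul1r, mul0r, mulr1, mulr0).
Qed.

Lemma adjoint_ch1 d k (E : 'I_k -> 'M[C]_d) :
  adjoint_ch E 1%:M = \sum_(i < k) dagger (E i) *m E i.
Proof. by apply: eq_bigr => i _; rewrite mulmx1. Qed.

Lemma adjoint_ch_sum d k (E : 'I_k -> 'M[C]_d) I (r : seq I) (P : pred I)
    (A : I -> 'M[C]_d) :
  adjoint_ch E (\sum_(a <- r | P a) A a) = \sum_(a <- r | P a) adjoint_ch E (A a).
Proof.
rewrite /adjoint_ch; under eq_bigr do rewrite mulmx_sumr mulmx_suml.
exact: exchange_big.
Qed.

(* Kraus operators |p><j| of the channel rho |-> Tr(rho) |p><p|. *)
Definition reset_kraus d (p : 'I_d) (j : 'I_d) : 'M[C]_d := delta_mx p j.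

Lemma adjoint_reset d (p : 'I_d) (X : 'M[C]_d) :
  adjoint_ch (reset_kraus p) X = X p p *: 1%:M.
Proof.
rewrite /adjoint_ch mx1_sum_delta scaler_sumr.
by apply: eq_bigr => j _; rewrite dagger_delta delta_mulmx_delta.
Qed.

Lemma reset_is_channel d (p : 'I_d) : is_channel (reset_kraus p).
Proof. by rewrite /is_channel -adjoint_ch1 adjoint_reset mxE eqxx scale1r. Qed.

Lemma maskable_delta d (p : 'I_d) : maskable (delta_mx p p : 'M[C]_d).
Proof.
split; first exact: dagger_delta.
exists d, (reset_kraus p); split; first exact: reset_is_channel.
by rewrite adjoint_reset mxE !eqxx scale1r.
Qed.

Lemma no_universal_masking_channel d :
  ~ exists (k : nat) (E : 'I_k -> 'M[C]_d.+2),
      is_channel E /\ forall O : 'M[C]_d.+2, maskable O -> adjoint_ch E O = 1%:M.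
Proof.
case=> k [E [chE maskE]].
have : adjoint_ch E 1%:M = 1%:M *+ d.+2.
  rewrite [in LHS]mx1_sum_delta adjoint_ch_sum.
  under eq_bigr => p _ do rewrite (maskE _ (maskable_delta p)).
  by rewrite sumr_const card_ord.
rewrite adjoint_ch1 chE => /matrixP/(_ 0 0).
by rewrite mulmxnE mxE eqxx mulr1n => /eqP; rewrite eq_sym pnatr_eq1.
Qed.

End Masking.

Theorem theorem2 (R : realType) :
  ~ exists (k : nat) (E : 'I_k -> 'M[R[i]]_2),
      is_channel E /\
      forall O : 'M[R[i]]_2, maskable O -> adjoint_ch E O = 1%:M.
Proof. exact: no_universal_masking_channel. Qed.
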